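(* Let $A$ be a finite-dimensional semisimple Hopf algebra over $k$, $G$ a finite group acting on $A$ by Hopf automorphisms, and $K=A\natural k^G$. For every finite-dimensional $K$-module $M$ and every positive integer $m$, $$\nu^K_m(M)=\sum_{x\in G,\ x^m=1}\nu^A_{m,x^{-1}}(M_x).$$
   Context: $k$ is algebraically closed of characteristic $0$. $k^G$ has basis $\{p_x\}_{x\in G}$ with $p_xp_y=\delta_{x,y}p_x$. The smash coproduct $K=A\natural k^G$ is $A\otimes k^G$ (elements written $a\natural p_x$) with tensor product algebra structure, comultiplication $\Delta(a\natural p_x)=\sum_{y\in G}(a_1\natural p_y)\otimes((y^{-1}\cdot a_2)\natural p_{y^{-1}x})$, counit $\varepsilon(a\natural p_x)=\delta_{1,x}\varepsilon(a)$, antipode $S(a\natural p_x)=(x^{-1}\cdot S(a))\natural p_{x^{-1}}$. Let $\Lambda_A$ be the normalized integral of $A$ ($\varepsilon(\Lambda_A)=1$); then $\Lambda_K=\Lambda_A\natural p_1$ is the normalized integral of $K$. For a $K$-module $M$, $M_x=p_x\cdot M$ (where $p_x$ means $1\natural p_x$), a $K$-submodule, $M=\bigoplus_x M_x$, and each $M_x$ is an $A$-module by restriction. Hopf powers: $h^{[m]}=\sum h_1\cdots h_m$ and, for a Hopf automorphism $\tau$, $h^{[m,\tau]}=\sum h_1(\tau\cdot h_2)\cdots(\tau^{m-1}\cdot h_m)$. Indicators: for a $K$-module $V$ with character $\chi_V$, $\nu^K_m(V)=\chi_V(\Lambda_K^{[m]})$; for an $A$-module $W$ with character $\chi_W$ and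 $x\in G$ whose order divides $m$, $\nu^A_{m,x}(W)=\chi_W(\Lambda_A^{[m,x]})$. *)

From HB Require Import structures.
From mathcomp Require Import all_boot all_order all_fingroup all_algebra.
Set Implicit Arguments. Unset Strict Implicit. Unset Printing Implicit Defensive.
Import GRing.Theory.
Local Open Scope ring_scope.

(* A finite-dimensional algebra-with-coalgebra over k, presented by a finite
   basis indexed by I and structure constants.  Elements are coordinate
   vectors  {ffun I -> k}  (h = \sum_i h i e_i). *)
Notation vec k I := {ffun I -> k}.
Definition vscale (k : fieldType) (I : finType) (c : k) (v : vec k I) : vec k I :=
  [ffun i => c * v i].
Notation "c *v v" := (vscale c v) (at level 40).

Record hopf (k : fieldType) (I : finType) := Hopf {
  mulc : I -> I -> vec k I;
  unitc : vec k I;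
  comc : I -> I -> I -> k;         (* Delta e_l = \sum_{i,j} comc l i j e_i (x) e_j *)
  counitc : I -> k;
  antic : I -> vec k I
}.

Section HopfOps.
Variables (k : fieldType) (I : finType) (H : hopf k I).

Definition basis (i : I) : vec k I := [ffun j => (i == j)%:R].
Definition hmul (a b : vec k I) : vec k I :=
  \sum_i \sum_j (a i * b j) *v mulc H i j.
Definition hcomul (a : vec k I) (i j : I) : k := \sum_l a l * comc H l i j.
Definition hcounit (a : vec k I) : k := \sum_l a l * counitc H l.
Definition hanti (a : vec k I) : vec k I := \sum_l a l *v antic H l.

Definition is_hopf : Prop :=
  [/\ (forall a b c, hmul (hmul a b) c = hmul a (hmul b c)),
      (forall a, hmul (unitc H) a = a /\ hmul a (unitc H) = a),
      (forall a (x y z : I), \sum_i hcomul a i z * hcomul (basis i) x y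
                           = \sum_j hcomul a x j * hcomul (basis j) y z)
    & (forall a (i j : I), \sum_p counitc H p * hcomul a p j = a j
                        /\ \sum_q counitc H q * hcomul a i q = a i)] /\
  [/\
      (forall a b (i j : I), hcomul (hmul a b) i j =
          \sum_p \sum_q \sum_r \sum_s
             hcomul a p q * hcomul b r s * (mulc H p r i * mulc H q s j))
        /\ (forall i j, hcomul (unitc H) i j = unitc H i * unitc H j),
      (forall a b, hcounit (hmul a b) = hcounit a * hcounit b)
        /\ hcounit (unitc H) = 1
    &
      (forall a, \sum_i \sum_j hcomul a i j *v hmul (hanti (basis i)) (basis j)
                   = hcounit a *v unitc H
              /\ \sum_i \sum_j hcomul a i j *v hmul (basis i) (hanti (basis j))
                   = hcounit a *v unitc H)].

(* semisimple: the left regular module is completely reducible,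
   i.e. every left ideal has a complementary left ideal *)
Definition left_ideal (L : vec k I -> Prop) : Prop :=
  [/\ L 0, (forall u v, L u -> L v -> L (u + v)),
      (forall (c : k) u, L u -> L (c *v u)) & (forall a u, L u -> L (hmul a u))].

Definition semisimple : Prop :=
  forall L, left_ideal L -> exists C, [/\ left_ideal C,
     (forall v, L v -> C v -> v = 0) &
     (forall v, exists u w, [/\ L u, C w & v = u + w])].

Definition is_nint (L : vec k I) : Prop :=
  (forall h, hmul h L = hcounit h *v L) /\ hcounit L = 1.

(* iterated coproduct Delta^(m) = (id (x) Delta^(m-1)) Delta, as the
   coefficient of e_{s_0} (x) ... (x) e_{s_m} for s of length m+1 *)
Fixpoint cop (m : nat) (h : vec k I) (s : seq I) : k :=
  match m, s with
  | 0, [:: i] => h i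
  | m'.+1, i :: t => \sum_j hcomul h i j * cop m' (basis j) t
  | _, _ => 0
  end.

(* Hopf power h^[m,tau] = \sum h_1 (tau h_2) ... (tau^(m-1) h_m) *)
Definition hpow (tau : vec k I -> vec k I) (m : nat) (h : vec k I) : vec k I :=
  \sum_(t : m.-tuple I)
     cop m.-1 h t *v foldr hmul (unitc H)
        [seq iter r.1 tau (basis r.2) | r <- zip (iota 0 m) t].

End HopfOps.

(* finite-dimensional modules: M = row vectors k^d, with  a . v := v *m rhov a *)
Record hmod (k : fieldType) (I : finType) := HMod {
  hdim : nat;
  hrho : I -> 'M[k]_hdim
}.

Section Modules.
Variables (k : fieldType) (I : finType) (H : hopf k I).

Definition rhov (M : hmod k I) (a : vec k I) : 'M[k]_(hdim M) :=
  \sum_i a i *: hrho M i.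

Definition is_hmodule (M : hmod k I) : Prop :=
  (forall a b, rhov M (hmul H a b) = rhov M b *m rhov M a)   (* (ab).v = a.(b.v) *)
  /\ rhov M (unitc H) = 1%:M.

Definition hchar (M : hmod k I) (a : vec k I) : k := \tr (rhov M a).

Definition nu (L : vec k I) (tau : vec k I -> vec k I) (m : nat) (M : hmod k I) : k :=
  hchar M (hpow H tau m L).
End Modules.

Section Action.
Variables (k : fieldType) (I : finType) (A : hopf k I) (gT : finGroupType).
Variable act : gT -> I -> vec k I.

Definition actv (x : gT) (h : vec k I) : vec k I := \sum_l h l *v act x l.

Definition hopf_action : Prop :=
  [/\ (forall h, actv 1%g h = h),
      (forall x y h, actv (x * y)%g h = actv x (actv y h)),
      (forall x a b, actv x (hmul A a b) = hmul A (actv x a) (actv x b))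
        /\ (forall x, actv x (unitc A) = unitc A),
      (forall x h (i j : I), hcomul A (actv x h) i j =
          \sum_p \sum_q hcomul A h p q * (act x p i * act x q j))
    & (forall x h, hcounit A (actv x h) = hcounit A h)
        /\ (forall x h, actv x (hanti A h) = hanti A (actv x h))].

(* smash coproduct K = A # k^G, basis e_i # p_x indexed by (i, x) *)
Definition smash : hopf k (I * gT)%type := Hopf
  (fun r s => if r.2 == s.2 then
        [ffun u : I * gT => mulc A r.1 s.1 u.1 * (u.2 == r.2)%:R] else 0)
  [ffun u : I * gT => unitc A u.1]
  (fun r s t => (t.2 == (s.2^-1 * r.2)%g)%:R *
        \sum_q comc A r.1 s.1 q * act (s.2^-1)%g q t.1)
  (fun r => (r.2 == 1%g)%:R * counitc A r.1)
  (fun r => [ffun u : I * gT =>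
        (u.2 == (r.2^-1)%g)%:R * actv (r.2^-1)%g (antic A r.1) u.1]).

(* a # 1 and 1 # p_x *)
Definition incl (a : vec k I) : vec k (I * gT)%type := [ffun u => a u.1].
Definition pK (x : gT) : vec k (I * gT)%type :=
  [ffun u => (u.2 == x)%:R * unitc A u.1].

(* M_x = p_x . M, as an A-module by restriction along a |-> a # 1 *)
Definition Mx (M : hmod k (I * gT)%type) (x : gT) : hmod k I :=
  let B := row_base (rhov M (pK x)) in
  @HMod k I _ (fun i => B *m rhov M (incl (@basis k I i)) *m pinvmx B).
End Action.

(* Semisimplicity makes the normalized integral unique, which forces Lambda_K = Lambda_A # p_1.
   The Hopf power obeys h^[n+1,tau] = \sum h_1 tau(h_2^[n,tau]); in K the coproduct
   Delta(a # p_x) = \sum_y (a_1 # p_y) (x) (y^-1 . a_2 # p_(y^-1 x)) and the orthogonality of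
   the p_y collapse this recursion to Lambda_K^[m] = \sum_(x^m = 1) Lambda_A^[m,x^-1] # p_x.
   Finally p_x is an idempotent commuting with a # 1, so chi_M(b # p_x) = chi_(M_x)(b). *)

From HB Require Import structures.
From mathcomp Require Import all_boot all_order all_fingroup all_algebra.
From mathcomp Require Import ring.
Set Implicit Arguments. Unset Strict Implicit. Unset Printing Implicit Defensive.
Import GRing.Theory.
Local Open Scope ring_scope.

Lemma sum_pairE (V : nmodType) (T1 T2 : finType) (F : T1 * T2 -> V) :
  \sum_p F p = \sum_i \sum_j F (i, j).
Proof. by rewrite pair_big; apply: eq_bigr => -[]. Qed.

Lemma exchange_big3 (V : nmodType) (T1 T2 T3 : finType) (F : T1 -> T2 -> T3 -> V) :
  \sum_i \sum_j \sum_l F i j l = \sum_l \sum_i \sum_j F i j l.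
Proof. by under eq_bigr => i _ do rewrite exchange_big; rewrite exchange_big. Qed.

Lemma exchange_big4 (V : nmodType) (T1 T2 T3 T4 : finType)
    (F : T1 -> T2 -> T3 -> T4 -> V) :
  \sum_i \sum_j \sum_l \sum_r F i j l r = \sum_l \sum_r \sum_i \sum_j F i j l r.
Proof.
rewrite (exchange_big3 (fun i j l => \sum_r F i j l r)); apply: eq_bigr => l _.
exact: (exchange_big3 (fun i j r => F i j l r)).
Qed.

Lemma sum_tupleS (V : nmodType) (I : finType) n (F : n.+1.-tuple I -> V) :
  \sum_t F t = \sum_i \sum_(t : n.-tuple I) F [tuple of i :: t].
Proof.
rewrite pair_big /= (reindex (fun p : I * n.-tuple I => [tuple of p.1 :: p.2])) //=.
exists (fun t => (thead t, [tuple of behead t])) => [[i t] _ | t _].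
  by rewrite theadE; congr pair; apply: val_inj.
by rewrite /= -tuple_eta.
Qed.

Lemma sum_tuple0 (V : nmodType) (I : finType) (F : 0.-tuple I -> V) :
  \sum_t F t = F [tuple].
Proof. by rewrite (big_pred1 [tuple]) // => t; apply/esym/eqP; rewrite [t]tuple0. Qed.

Section CoordinateVectors.
Variables (k : fieldType) (I : finType).
Implicit Types (a b : vec k I) (c d : k).

Lemma vsA c d a : c *v (d *v a) = (c * d) *v a.
Proof. by apply/ffunP => i; rewrite !ffunE mulrA. Qed.
Lemma vsDr c a b : c *v (a + b) = c *v a + c *v b.
Proof. by apply/ffunP => i; rewrite !ffunE mulrDr. Qed.
Lemma vsDl c d a : (c + d) *v a = c *v a + d *v a.
Proof. by apply/ffunP => i; rewrite !ffunE mulrDl. Qed.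
Lemma vs0r c : c *v (0 : vec k I) = 0.
Proof. by apply/ffunP => i; rewrite !ffunE mulr0. Qed.
Lemma vs0l a : 0 *v a = 0.
Proof. by apply/ffunP => i; rewrite !ffunE mul0r. Qed.
Lemma vs1 a : 1 *v a = a.
Proof. by apply/ffunP => i; rewrite !ffunE mul1r. Qed.
Lemma vs_sumr (J : finType) (P : pred J) c (F : J -> vec k I) :
  c *v (\sum_(j | P j) F j) = \sum_(j | P j) c *v F j.
Proof. exact: (big_morph _ (vsDr c) (vs0r c)). Qed.
Lemma vs_suml (J : finType) (P : pred J) a (F : J -> k) :
  (\sum_(j | P j) F j) *v a = \sum_(j | P j) F j *v a.
Proof. exact: (big_morph (fun x : k => x *v a) (fun x y => vsDl x y a) (vs0l a)). Qed.

Lemma vec_basis_decomp a : a = \sum_i a i *v basis k i.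
Proof.
apply/ffunP => i; rewrite sum_ffunE (bigD1 i) //= big1 => [|j ji].
  by rewrite !ffunE eqxx mulr1 addr0.
by rewrite !ffunE (negbTE ji) mulr0.
Qed.
End CoordinateVectors.

Section HopfLinearity.
Variables (k : fieldType) (I : finType) (H : hopf k I).
Implicit Types (a b c : vec k I).

Lemma hmulE a b i : hmul H a b i = \sum_p \sum_q a p * b q * mulc H p q i.
Proof.
rewrite /hmul sum_ffunE; apply: eq_bigr => p _; rewrite sum_ffunE.
by apply: eq_bigr => q _; rewrite ffunE.
Qed.

Lemma hmulDl a b c : hmul H (a + b) c = hmul H a c + hmul H b c.
Proof.
apply/ffunP => i; rewrite ffunE !hmulE -big_split; apply: eq_bigr => p _.
by rewrite -big_split; apply: eq_bigr => q _; rewrite ffunE !mulrDl.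
Qed.
Lemma hmulDr a b c : hmul H a (b + c) = hmul H a b + hmul H a c.
Proof.
apply/ffunP => i; rewrite ffunE !hmulE -big_split; apply: eq_bigr => p _.
by rewrite -big_split; apply: eq_bigr => q _; rewrite ffunE mulrDr mulrDl.
Qed.
Lemma hmulZl (d : k) a b : hmul H (d *v a) b = d *v hmul H a b.
Proof.
apply/ffunP => i; rewrite !ffunE !hmulE mulr_sumr; apply: eq_bigr => p _.
by rewrite mulr_sumr; apply: eq_bigr => q _; rewrite ffunE !mulrA.
Qed.
Lemma hmulZr (d : k) a b : hmul H a (d *v b) = d *v hmul H a b.
Proof.
apply/ffunP => i; rewrite !ffunE !hmulE mulr_sumr; apply: eq_bigr => p _.
by rewrite mulr_sumr; apply: eq_bigr => q _; rewrite ffunE; ring.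
Qed.
Lemma hmul0l a : hmul H 0 a = 0.
Proof.
apply/ffunP => i; rewrite hmulE ffunE big1 // => p _.
by rewrite big1 // => q _; rewrite ffunE !mul0r.
Qed.
Lemma hmul0r a : hmul H a 0 = 0.
Proof.
apply/ffunP => i; rewrite hmulE ffunE big1 // => p _.
by rewrite big1 // => q _; rewrite ffunE mulr0 mul0r.
Qed.
Lemma hmul_sumr (J : finType) (P : pred J) a (F : J -> vec k I) :
  hmul H a (\sum_(j | P j) F j) = \sum_(j | P j) hmul H a (F j).
Proof. exact: (big_morph _ (hmulDr a) (hmul0r a)). Qed.
Lemma hmul_suml (J : finType) (P : pred J) a (F : J -> vec k I) :
  hmul H (\sum_(j | P j) F j) a = \sum_(j | P j) hmul H (F j) a.
Proof. exact: (big_morph (fun x => hmul H x a) (fun x y => hmulDl x y a) (hmul0l a)). Qed.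

Lemma hcomul_decomp a i j : hcomul H a i j = \sum_l a l * hcomul H (basis k l) i j.
Proof.
apply: eq_bigr => l _; congr (_ * _); rewrite /hcomul (bigD1 l) //= big1 => [|l' ll'].
  by rewrite ffunE eqxx mul1r addr0.
by rewrite ffunE eq_sym (negbTE ll') mul0r.
Qed.

Lemma hcomulZ (d : k) a i j : hcomul H (d *v a) i j = d * hcomul H a i j.
Proof. by rewrite /hcomul mulr_sumr; apply: eq_bigr => l _; rewrite ffunE mulrA. Qed.

Lemma hcounitDZ (d : k) a b : hcounit H (d *v a + b) = d * hcounit H a + hcounit H b.
Proof.
rewrite /hcounit mulr_sumr -big_split; apply: eq_bigr => l _.
by rewrite !ffunE mulrDl mulrA.
Qed.
End HopfLinearity.

Section HopfPowerRecursion.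
Variables (k : fieldType) (I : finType) (H : hopf k I).

(* The exponent is shifted: [hpow_rec tau n] is the Hopf power of exponent [n.+1]. *)
Fixpoint hpow_rec (tau : vec k I -> vec k I) (n : nat) (h : vec k I) : vec k I :=
  if n is n'.+1 then
    \sum_i \sum_j hcomul H h i j *v hmul H (basis k i) (tau (hpow_rec tau n' (basis k j)))
  else h.

Lemma hpow_rec_decomp tau n b :
  hpow_rec tau n b = \sum_l b l *v hpow_rec tau n (basis k l).
Proof.
case: n => [|n] /=; first exact: vec_basis_decomp.
under eq_bigr => i _ do under eq_bigr => j _ do rewrite hcomul_decomp vs_suml.
rewrite exchange_big3; apply: eq_bigr => l _; rewrite vs_sumr; apply: eq_bigr => i _.
by rewrite vs_sumr; apply: eq_bigr => j _; rewrite vsA.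
Qed.

Variable tau : vec k I -> vec k I.
Hypothesis tauD : forall a b, tau (a + b) = tau a + tau b.
Hypothesis tau0 : tau 0 = 0.
Hypothesis tauZ : forall c a, tau (c *v a) = c *v tau a.
Hypothesis tauM : forall a b, tau (hmul H a b) = hmul H (tau a) (tau b).
Hypothesis tau1 : tau (unitc H) = unitc H.
Hypothesis hmul1r : forall a, hmul H a (unitc H) = a.

Lemma tau_sum (J : finType) (P : pred J) (F : J -> vec k I) :
  tau (\sum_(j | P j) F j) = \sum_(j | P j) tau (F j).
Proof. exact: (big_morph _ tauD tau0). Qed.

Lemma foldr_hmul_iter_shift o (t : seq I) :
  foldr (hmul H) (unitc H)
    [seq iter r.1 tau (basis k r.2) | r <- zip (iota o.+1 (size t)) t]
  = tau (foldr (hmul H) (unitc H)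
    [seq iter r.1 tau (basis k r.2) | r <- zip (iota o (size t)) t]).
Proof. by elim: t o => [|i t IH] o /=; rewrite ?tau1 // IH tauM. Qed.

Lemma hpow_recE n h : hpow H tau n.+1 h = hpow_rec tau n h.
Proof.
elim: n h => [|n IH] h.
  rewrite /hpow sum_tupleS /= [RHS](vec_basis_decomp h); apply: eq_bigr => i _.
  by rewrite sum_tuple0 /= hmul1r.
rewrite /hpow sum_tupleS /=; apply: eq_bigr => i _.
have E (t : n.+1.-tuple I) : (1%N :: iota 2 n) = iota 1 (size t) by rewrite size_tuple.
under eq_bigr => t _ do rewrite (E t) foldr_hmul_iter_shift vs_suml.
rewrite exchange_big /=; apply: eq_bigr => j _.
rewrite -IH /hpow tau_sum hmul_sumr vs_sumr; apply: eq_bigr => t _.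
by rewrite /= tauZ hmulZr vsA size_tuple.
Qed.
End HopfPowerRecursion.

Section HopfAction.
Variables (k : fieldType) (I : finType) (A : hopf k I) (gT : finGroupType).
Variable act : gT -> I -> vec k I.
Hypothesis Hact : hopf_action A act.

Lemma actvD x a b : actv act x (a + b) = actv act x a + actv act x b.
Proof. by rewrite /actv -big_split; apply: eq_bigr => l _; rewrite ffunE vsDl. Qed.
Lemma actv0 x : actv act x 0 = 0.
Proof. by rewrite /actv big1 // => l _; rewrite ffunE vs0l. Qed.
Lemma actvZ x c a : actv act x (c *v a) = c *v actv act x a.
Proof. by rewrite /actv vs_sumr; apply: eq_bigr => l _; rewrite ffunE vsA. Qed.
Lemma actv_sum x (J : finType) (P : pred J) (F : J -> vec k I) :
  actv act x (\sum_(j | P j) F j) = \sum_(j | P j) actv act x (F j).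
Proof. exact: (big_morph _ (actvD x) (actv0 x)). Qed.
Lemma actv_basis x q : actv act x (basis k q) = act x q.
Proof.
rewrite /actv (big_only1 q) // => [|l lq _]; first by rewrite ffunE eqxx vs1.
by rewrite ffunE eq_sym (negbTE lq) vs0l.
Qed.
Lemma actvM x a b : actv act x (hmul A a b) = hmul A (actv act x a) (actv act x b).
Proof. by case: Hact => _ _ [-> _]. Qed.
Lemma actv1 x : actv act x (unitc A) = unitc A.
Proof. by case: Hact => _ _ [_ ->]. Qed.
Lemma hcomul_actv x h i j : hcomul A (actv act x h) i j =
  \sum_p \sum_q hcomul A h p q * (act x p i * act x q j).
Proof. by case: Hact => _ _ _ ->. Qed.

Lemma hpow_rec_actv x n b :
  hpow_rec A (actv act x) n (actv act x b) = actv act x (hpow_rec A (actv act x) n b).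
Proof.
elim: n b => [|n IH] b //=.
rewrite actv_sum; under [RHS]eq_bigr => p _ do rewrite actv_sum.
under eq_bigr => i _ do under eq_bigr => j _ do rewrite hcomul_actv vs_suml.
under eq_bigr => i _ do under eq_bigr => j _ do under eq_bigr => p _ do rewrite vs_suml.
rewrite exchange_big4; apply: eq_bigr => p _; apply: eq_bigr => q _.
rewrite actvZ actvM -(IH (basis k q)) !actv_basis.
rewrite [in hmul A (act x p) _](vec_basis_decomp (act x p)) hmul_suml vs_sumr.
apply: eq_bigr => i _.
rewrite hmulZl vsA (hpow_rec_decomp _ _ n (act x q)) actv_sum hmul_sumr vs_sumr.
by apply: eq_bigr => j _; rewrite actvZ hmulZr vsA; congr (_ *v _); ring.
Qed.

Lemma hpow_actvE x n h : (forall a, hmul A a (unitc A) = a) ->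
  hpow A (actv act x) n.+1 h = hpow_rec A (actv act x) n h.
Proof.
by move=> hmul1r; apply: hpow_recE => //;
  [exact: actvD | exact: actv0 | exact: actvZ | exact: actvM | exact: actv1].
Qed.
End HopfAction.

Section IntegralUniqueness.
Variables (k : fieldType) (I : finType) (A : hopf k I).
Hypothesis ssA : semisimple A.
Hypothesis hmul1r : forall a, hmul A a (unitc A) = a.

(* [u := L - L'] is a left integral with [hcounit u = 0]; writing [1 = c u + w] with [w] in a
   complementary left ideal, [u = u 1 = c hcounit u u + u w = u w] lies in both ideals. *)
Lemma nint_unique L L' : is_nint A L -> is_nint A L' -> L = L'.
Proof.
move=> [HL eL] [HL' eL'].
pose u := (-1) *v L' + L.
have Hu h : hmul A h u = hcounit A h *v u.
  by rewrite /u hmulDr hmulZr HL HL' !vsA vsDr vsA mulrC.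
have eu : hcounit A u = 0 by rewrite /u hcounitDZ eL eL' mulr1 addNr.
pose span_u v := exists c, v = c *v u.
have span_u_ideal : left_ideal A span_u.
  split.
  - by exists 0; rewrite vs0l.
  - by move=> _ _ [c1 ->] [c2 ->]; exists (c1 + c2); rewrite vsDl.
  - by move=> c _ [c1 ->]; exists (c * c1); rewrite vsA.
  - by move=> a _ [c1 ->]; exists (c1 * hcounit A a); rewrite hmulZr Hu vsA.
have [C [[_ _ _ CM] Cdisj Ccov]] := ssA span_u_ideal.
have [_ [w [[c ->] Cw E]]] := Ccov (unitc A).
have u0 : u = 0.
  apply: Cdisj; first by exists 1; rewrite vs1.
  by rewrite -[u]hmul1r E hmulDr hmulZr Hu eu vs0l vs0r add0r; apply: CM.
apply/ffunP => i; move/ffunP: u0 => /(_ i).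
by rewrite /u !ffunE mulN1r => /eqP; rewrite addrC subr_eq0 => /eqP.
Qed.
End IntegralUniqueness.

Section SmashCoproduct.
Variables (k : fieldType) (I : finType) (A : hopf k I) (gT : finGroupType).
Variable act : gT -> I -> vec k I.
Local Notation K := (smash A act).
Local Notation J := (I * gT)%type.

(* An element of [K] is [\sum_x slice a x # p_x], and [smash_vec b x] is [b # p_x]. *)
Definition slice (a : vec k J) (x : gT) : vec k I := [ffun i => a (i, x)].
Definition smash_vec (b : vec k I) (x : gT) : vec k J :=
  [ffun u => (u.2 == x)%:R * b u.1].

Lemma slice_ext a b : (forall x, slice a x = slice b x) -> a = b.
Proof.
move=> E; apply/ffunP => -[i x].
by have := congr1 (fun f : vec k I => f i) (E x); rewrite !ffunE.
Qed.

Lemma slice_smash_vec b x y : slice (smash_vec b x) y = (y == x)%:R *v b.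
Proof. by apply/ffunP => i; rewrite !ffunE. Qed.

Lemma sliceZ c a x : slice (c *v a) x = c *v slice a x.
Proof. by apply/ffunP => i; rewrite !ffunE. Qed.

Lemma slice_sum (T : finType) (P : pred T) (F : T -> vec k J) x :
  slice (\sum_(t | P t) F t) x = \sum_(t | P t) slice (F t) x.
Proof.
by apply/ffunP => i; rewrite !ffunE !sum_ffunE; apply: eq_bigr => t _; rewrite ffunE.
Qed.

Lemma basis_smash u : basis k u = smash_vec (basis k u.1) u.2.
Proof.
apply/ffunP => -[j y]; rewrite !ffunE; case: u => [i x] /=.
by rewrite xpair_eqE [y == x]eq_sym; case: (x == y); case: (i == j);
  rewrite /= ?mul1r ?mul0r.
Qed.

Lemma slice_unit_smash x : slice (unitc K) x = unitc A.
Proof. by apply/ffunP => i; rewrite !ffunE. Qed.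

Lemma slice_hmul_smash a b x : slice (hmul K a b) x = hmul A (slice a x) (slice b x).
Proof.
apply/ffunP => i; rewrite ffunE !hmulE sum_pairE; apply: eq_bigr => p1 _.
rewrite (big_only1 x) // => [|p2 p2x _]; last first.
  rewrite sum_pairE big1 // => q1 _; rewrite big1 // => q2 _ /=.
  case: ifP => [/eqP <-|_]; last by rewrite ffunE mulr0.
  by rewrite ffunE /= eq_sym (negbTE p2x) !mulr0.
rewrite sum_pairE; apply: eq_bigr => q1 _.
rewrite (big_only1 x) // => [|q2 q2x _] /=; last first.
  by rewrite eq_sym (negbTE q2x) ffunE mulr0.
by rewrite eqxx !ffunE eqxx mulr1.
Qed.

Lemma hmul1r_smash : (forall b, hmul A b (unitc A) = b) ->
  forall a, hmul K a (unitc K) = a.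
Proof.
by move=> hmul1r a; apply: slice_ext => x; rewrite slice_hmul_smash slice_unit_smash hmul1r.
Qed.

Lemma hcounit_smash a : hcounit K a = hcounit A (slice a 1%g).
Proof.
rewrite /hcounit sum_pairE; apply: eq_bigr => i _.
rewrite (big_only1 1%g) // => [|g g1 _] /=; first by rewrite eqxx mul1r ffunE.
by rewrite (negbTE g1) mul0r mulr0.
Qed.

Lemma hcomul_smash h u v : hcomul K h u v =
  \sum_q hcomul A (slice h (u.2 * v.2)%g) u.1 q * act (u.2^-1)%g q v.1.
Proof.
rewrite /hcomul sum_pairE exchange_big /= (big_only1 (u.2 * v.2)%g) // => [|g gn _].
  rewrite mulKg eqxx; under eq_bigr do rewrite mul1r mulr_sumr.
  rewrite exchange_big /=; apply: eq_bigr => q _; rewrite mulr_suml.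
  by apply: eq_bigr => l _; rewrite ffunE mulrA.
rewrite big1 // => l _ /=.
case: (eqVneq v.2 (u.2^-1 * g)%g) => [E|_]; last by rewrite mul0r mulr0.
by move: gn; rewrite E mulKVg eqxx.
Qed.
End SmashCoproduct.

Section SmashIntegralAndPowers.
Variables (k : fieldType) (I : finType) (A : hopf k I) (gT : finGroupType).
Variable act : gT -> I -> vec k I.
Local Notation K := (smash A act).

Lemma smash_nint LA LK : semisimple A -> (forall a, hmul A a (unitc A) = a) ->
  (forall a, hmul A (unitc A) a = a) ->
  is_nint A LA -> is_nint K LK -> LK = smash_vec LA 1%g.
Proof.
move=> ssA hmul1r hmul1l HLA [HLK eLK].
have slice_LK y b : slice (hmul K (smash_vec b y) LK) y = hmul A b (slice LK y).
  by rewrite slice_hmul_smash slice_smash_vec eqxx vs1.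
have LK_off1 y : y != 1%g -> slice LK y = 0.
  move=> y1; have := slice_LK y (unitc A); rewrite HLK sliceZ hmul1l => <-.
  rewrite hcounit_smash slice_smash_vec eq_sym (negbTE y1) vs0l.
  by rewrite /hcounit big1 ?vs0l // => l _; rewrite ffunE !mul0r.
have HL1 : is_nint A (slice LK 1%g).
  split; last by rewrite -(hcounit_smash A act) eLK.
  move=> b; rewrite -slice_LK HLK sliceZ hcounit_smash.
  by rewrite slice_smash_vec eqxx vs1.
have E := nint_unique ssA hmul1r HL1 HLA.
apply: slice_ext => x; rewrite slice_smash_vec; case: (eqVneq x 1%g) => [->|x1].
  by rewrite E vs1.
by rewrite LK_off1 // vs0l.
Qed.

Hypothesis Hact : hopf_action A act.

(* Only the component [y = x] of [Delta (a # p_x0)] survives multiplication by [e_i # p_x],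
   and it sends the remaining factors to [p_(x^-1 x0)]; iterating gives [x^(n+1) = x0]. *)
Lemma slice_hpow_rec_smash n a x0 x :
  slice (hpow_rec K id n (smash_vec a x0)) x =
  ((x ^+ n.+1)%g == x0)%:R *v hpow_rec A (actv act x^-1) n a.
Proof.
elim: n a x0 => [|n IH] a x0; first by rewrite /= slice_smash_vec expg1.
rewrite /= slice_sum.
under [LHS]eq_bigr => u _ do rewrite slice_sum.
under [LHS]eq_bigr => u _ do under eq_bigr => v _ do
  rewrite sliceZ slice_hmul_smash !basis_smash IH slice_smash_vec hcomul_smash.
rewrite sum_pairE vs_sumr; apply: eq_bigr => i _.
rewrite (big_only1 x) // => [|y yx _]; last first.
  by rewrite big1 // => v _; rewrite eq_sym (negbTE yx) vs0l hmul0l vs0r.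
rewrite sum_pairE /= vs_sumr.
under eq_bigr => j _.
  rewrite (big_only1 (x ^+ n.+1)%g) // => [|w wx _]; last first.
    by rewrite eq_sym (negbTE wx) vs0l hmul0r vs0r.
  over.
rewrite !eqxx !vs1 slice_smash_vec -expgS -vs_sumr.
under eq_bigr => j _ do rewrite vs_suml.
rewrite exchange_big vs_sumr; apply: eq_bigr => q _ /=.
rewrite -(hpow_rec_actv Hact) actv_basis (hpow_rec_decomp _ _ n (act x^-1 q)).
rewrite hmul_sumr !vs_sumr; apply: eq_bigr => j _.
by rewrite hmulZr !vsA hcomulZ hmulZr vsA; congr (_ *v _); ring.
Qed.

Lemma hpow_rec_smash n a x0 :
  hpow_rec K id n (smash_vec a x0) =
  \sum_(y | (y ^+ n.+1 == x0)%g) smash_vec (hpow_rec A (actv act y^-1) n a) y.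
Proof.
apply: slice_ext => x; rewrite slice_hpow_rec_smash slice_sum big_mkcond /=.
rewrite (big_only1 x) // => [|y yx _].
  by case: ifP => _; rewrite ?slice_smash_vec ?eqxx ?vs1 ?vs0l.
by case: ifP => // _; rewrite slice_smash_vec eq_sym (negbTE yx) vs0l.
Qed.
End SmashIntegralAndPowers.

(* The left-hand side is the trace of [R] on the image of the idempotent [P]. *)
Lemma mxtrace_row_base_conj (F : fieldType) d (P R : 'M[F]_d) :
  P *m P = P -> P *m R = R *m P ->
  \tr (row_base P *m R *m pinvmx (row_base P)) = \tr (R *m P).
Proof.
move=> PP PR; set B := row_base P.
have BP : B *m P = B.
  have BpP : B *m pinvmx P *m P = B by apply: mulmxKpV; rewrite eq_row_base.
  by rewrite -{1}BpP -mulmxA PP BpP.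
have PB : P *m pinvmx B *m B = P by apply: mulmxKpV; rewrite eq_row_base.
rewrite -{1}BP -(mulmxA B P R) PR -mulmxA mxtrace_mulC.
by rewrite -(mulmxA R P) -mulmxA PB.
Qed.

Section Characters.
Variables (k : fieldType) (I : finType).

Lemma rhovD (M : hmod k I) a b : rhov M (a + b) = rhov M a + rhov M b.
Proof. by rewrite /rhov -big_split; apply: eq_bigr => i _; rewrite ffunE scalerDl. Qed.
Lemma rhov0 (M : hmod k I) : rhov M 0 = 0.
Proof. by rewrite /rhov big1 // => i _; rewrite ffunE scale0r. Qed.
Lemma rhovZ (M : hmod k I) c a : rhov M (c *v a) = c *: rhov M a.
Proof. by rewrite /rhov scaler_sumr; apply: eq_bigr => i _; rewrite ffunE scalerA. Qed.

Lemma hchar_sum (M : hmod k I) (T : finType) (P : pred T) (F : T -> vec k I) :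
  hchar M (\sum_(t | P t) F t) = \sum_(t | P t) hchar M (F t).
Proof.
rewrite /hchar (big_morph _ (rhovD M) (rhov0 M)).
exact: (big_morph _ (@mxtraceD _ _) (@mxtrace0 _ _)).
Qed.
End Characters.

Section ComponentModules.
Variables (k : fieldType) (I : finType) (A : hopf k I) (gT : finGroupType).
Variable act : gT -> I -> vec k I.
Local Notation K := (smash A act).
Hypothesis hmul1r : forall a, hmul A a (unitc A) = a.
Hypothesis hmul1l : forall a, hmul A (unitc A) a = a.

Lemma slice_incl (b : vec k I) x : slice (incl gT b) x = b.
Proof. by apply/ffunP => i; rewrite !ffunE. Qed.
Lemma pK_smash_vec (x : gT) : pK A x = smash_vec (unitc A) x.
Proof. by apply/ffunP => u; rewrite !ffunE. Qed.

Lemma smash_vec_pK_incl b y :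
  smash_vec b y = hmul K (pK A y) (incl gT b) /\ smash_vec b y = hmul K (incl gT b) (pK A y).
Proof.
split; apply: slice_ext => x;
  by rewrite slice_hmul_smash pK_smash_vec !slice_smash_vec slice_incl
    ?hmulZl ?hmulZr ?hmul1l ?hmul1r.
Qed.

Lemma rhov_incl (M : hmod k (I * gT)%type) (b : vec k I) :
  rhov M (incl gT b) = \sum_i b i *: rhov M (incl gT (basis k i)).
Proof.
under eq_bigr do rewrite -rhovZ.
rewrite -(big_morph _ (rhovD M) (rhov0 M)); congr (rhov M _).
apply/ffunP => u; rewrite ffunE sum_ffunE {1}(vec_basis_decomp b) sum_ffunE.
by apply: eq_bigr => i _; rewrite !ffunE.
Qed.

Lemma hchar_smash_vec (M : hmod k (I * gT)%type) (b : vec k I) (y : gT) :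
  is_hmodule K M -> hchar M (smash_vec b y) = hchar (Mx A M y) b.
Proof.
case=> rhovM _.
set P := rhov M (pK A y); set R := rhov M (incl gT b).
have [E1 E2] := smash_vec_pK_incl b y.
have PP : P *m P = P.
  rewrite /P -rhovM; congr (rhov M _); apply: slice_ext => x.
  by rewrite slice_hmul_smash pK_smash_vec !slice_smash_vec hmulZl hmulZr hmul1l vsA
    -natrM mulnb andbb.
have PR : P *m R = R *m P by rewrite /P /R -!rhovM -E1 -E2.
rewrite /hchar E1 rhovM -/P -/R -mxtrace_row_base_conj // /R rhov_incl.
rewrite mulmx_sumr mulmx_suml /rhov /=; congr (\tr _); apply: eq_bigr => i _.
by rewrite -scalemxAr -scalemxAl.
Qed.
End ComponentModules.

Theorem theorem4p1 (k : closedFieldType) (char0 : [pchar k] =i pred0)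
  (I : finType) (A : hopf k I) (HA : is_hopf A) (ssA : semisimple A)
  (gT : finGroupType) (act : gT -> I -> {ffun I -> k})
  (Hact : hopf_action A act)
  (LA : {ffun I -> k}) (HLA : is_nint A LA)
  (LK : {ffun (I * gT)%type -> k}) (HLK : is_nint (smash A act) LK)
  (M : hmod k (I * gT)%type) (HM : is_hmodule (smash A act) M)
  (m : nat) (m_gt0 : (0 < m)%N) :
  nu (smash A act) LK id m M =
  \sum_(x : gT | (x ^+ m == 1)%g) nu A LA (actv act (x^-1)%g) m (Mx A M x).
Proof.
have [[_ hmul1 _ _] _] := HA.
have hmul1l a : hmul A (unitc A) a = a by case: (hmul1 a).
have hmul1r a : hmul A a (unitc A) = a by case: (hmul1 a).
case: m m_gt0 => // n _.
rewrite /nu hpow_recE //; last exact: hmul1r_smash.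
rewrite (smash_nint ssA hmul1r hmul1l HLA HLK) hpow_rec_smash // hchar_sum.
apply: eq_bigr => x _.
by rewrite (hchar_smash_vec hmul1r hmul1l _ _ HM) hpow_actvE.
Qed.
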